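(* Let $\Delta:M_n\to M_n$ be a weak-2-local derivation, and let $p_1,\ldots,p_n$ be mutually orthogonal minimal projections in $M_n$ with $\Delta(p_k)=0$ for $1\le k\le n$. If $\Delta(p_1+e_{1j_0}-e_{i_01})=0$ for some $2\le i_0,j_0\le n$, then $\Delta(e_{i_0j_0})=0$.
   Context: $M_n=M_n(\mathbb{C})$. For $i,j$, $e_{ij}$ is the unique minimal partial isometry in $M_n$ with $e_{ij}^*e_{ij}=p_j$ and $e_{ij}e_{ij}^*=p_i$. A derivation on $M_n$ is a linear map $D$ with $D(ab)=D(a)b+aD(b)$. A (not necessarily linear) map $\Delta:M_n\to M_n$ is a weak-2-local derivation if for every $a,b\in M_n$ and every $\phi\in M_n^*$ there exists a derivation $D_{a,b,\phi}$ such that $\phi\Delta(a)=\phi D_{a,b,\phi}(a)$ and $\phi\Delta(b)=\phi D_{a,b,\phi}(b)$. *)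

From HB Require Import structures.
From mathcomp Require Import all_boot all_order all_algebra.
From mathcomp Require Import complex.
From mathcomp Require Import Rstruct.
From Stdlib Require Import Reals.
Set Implicit Arguments. Unset Strict Implicit. Unset Printing Implicit Defensive.
Import Order.TTheory GRing.Theory Num.Theory.
Local Open Scope ring_scope.

Definition C : numClosedFieldType := (Rdefinitions.R)[i].

Definition adjmx (m n : nat) (A : 'M[C]_(m, n)) : 'M[C]_(n, m) :=
  (map_mx (@Num.conj_op C) A)^T.

Definition is_projection (n : nat) (p : 'M[C]_n) : Prop :=
  p *m p = p /\ adjmx p = p.

Definition is_minimal_projection (n : nat) (p : 'M[C]_n) : Prop :=
  is_projection p /\ p <> 0 /\
  forall q : 'M[C]_n, is_projection q -> q *m p = q -> q = 0 \/ q = p.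

Definition is_linear_map (n : nat) (D : 'M[C]_n -> 'M[C]_n) : Prop :=
  forall (c : C) (x y : 'M[C]_n), D (c *: x + y) = c *: D x + D y.

Definition is_functional (n : nat) (phi : 'M[C]_n -> C) : Prop :=
  forall (c : C) (x y : 'M[C]_n), phi (c *: x + y) = c * phi x + phi y.

Definition is_derivation (n : nat) (D : 'M[C]_n -> 'M[C]_n) : Prop :=
  is_linear_map D /\ forall a b : 'M[C]_n, D (a *m b) = D a *m b + a *m D b.

Definition is_weak_2_local_derivation (n : nat) (Delta : 'M[C]_n -> 'M[C]_n) : Prop :=
  forall (a b : 'M[C]_n) (phi : 'M[C]_n -> C), is_functional phi ->
    exists D : 'M[C]_n -> 'M[C]_n, is_derivation D /\
      phi (Delta a) = phi (D a) /\ phi (Delta b) = phi (D b).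

(* Testing the weak-2-local derivation [Delta] against [x |-> (F x V)_ij]
   yields a derivation [D] that agrees with [Delta] on this functional at [w]
   and at a point [q] with [Delta q = 0].  If [F] and [V] kill [w - lam q]
   from the left and from the right, the Leibniz rule gives
   [F (D w) V = lam F (D q) V], hence [F (Delta w) V = 0].  With
   (q, lam) = (e_ii, 0), (e_ii, 1), (e_jj, 1) this puts [Delta e_ij] in the
   corner [e_ii M_n e_jj]; with [q = p_1 + e_1j - e_i1] it gives
   [e_1i (Delta e_ij) e_j1 = 0], and conjugating back by [e_i1] and [e_1j]
   yields [Delta e_ij = 0]. *)
From HB Require Import structures.
From mathcomp Require Import all_boot all_order all_algebra.
Set Implicit Arguments.
Unset Strict Implicit.
Unset Printing Implicit Defensive.
Import GRing.Theory Num.Theory.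
Local Open Scope ring_scope.

Lemma adjmxK m n (A : 'M[C]_(m, n)) : adjmx (adjmx A) = A.
Proof. by apply/matrixP=> i j; rewrite /adjmx !mxE conjCK. Qed.

Lemma adjmxM m n k (A : 'M[C]_(m, n)) (B : 'M[C]_(n, k)) :
  adjmx (A *m B) = adjmx B *m adjmx A.
Proof. by rewrite /adjmx map_mxM trmx_mul. Qed.

Lemma adjmxB m n (A B : 'M[C]_(m, n)) : adjmx (A - B) = adjmx A - adjmx B.
Proof. by apply/matrixP=> i j; rewrite /adjmx !mxE rmorphB. Qed.

Lemma adjmx_mul_eq0 m n (A : 'M[C]_(m, n)) : adjmx A *m A = 0 -> A = 0.
Proof.
move=> AA0; apply/matrixP=> i j; rewrite mxE.
have /eqP := congr1 (fun M : 'M[C]_n => M j j) AA0.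
rewrite !mxE psumr_eq0 => [/allP/(_ i (mem_index_enum _))|k _].
  by rewrite /adjmx !mxE mulrC -normCK sqrf_eq0 normr_eq0 => /eqP.
by rewrite /adjmx !mxE mulrC -normCK exprn_ge0.
Qed.

(* A partial isometry [A] (with [A^* A = P] idempotent) is the identity on
   its initial space: [A (1 - P)] vanishes since its square modulus does. *)
Lemma partial_isometry_mulmx_src m n (A : 'M[C]_(m, n)) (P : 'M[C]_n) :
  adjmx A *m A = P -> P *m P = P -> A *m P = A.
Proof.
move=> AA_P PP.
have adjP : adjmx P = P by rewrite -AA_P adjmxM adjmxK.
apply/eqP; rewrite -subr_eq0; apply/eqP/adjmx_mul_eq0.
rewrite adjmxB adjmxM adjP mulmxBl !mulmxBr !mulmxA AA_P.
by rewrite -(mulmxA P (adjmx A)) AA_P !PP !subrr.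
Qed.

Section MatrixUnits.

Variables (n : nat) (p : 'I_n -> 'M[C]_n) (e : 'I_n -> 'I_n -> 'M[C]_n).
Hypothesis p_proj : forall k, is_projection (p k).
Hypothesis p_orth : forall k l, k != l -> p k *m p l = 0.
Hypothesis e_adj : forall i j,
  adjmx (e i j) *m e i j = p j /\ e i j *m adjmx (e i j) = p i.
Hypothesis e_trans : forall i j k, e i j *m e j k = e i k.

Lemma mulmx_unit_proj i j : e i j *m p j = e i j.
Proof. exact: partial_isometry_mulmx_src (e_adj i j).1 (p_proj j).1. Qed.

Lemma mulmx_proj_unit i j : p i *m e i j = e i j.
Proof.
have := @partial_isometry_mulmx_src _ _ (adjmx (e i j)) (p i).
rewrite adjmxK => /(_ (e_adj i j).2 (p_proj i).1) /(congr1 (@adjmx _ _)).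
by rewrite adjmxM adjmxK (p_proj i).2.
Qed.

Lemma unit_diag i : e i i = p i.
Proof. by rewrite -(mulmx_proj_unit i i) -(e_adj i i).1 -mulmxA e_trans. Qed.

Lemma mulmx_units i j k l :
  e i j *m e k l = if j == k then e i l else 0.
Proof.
case: eqP => [<-|/eqP jk]; first exact: e_trans.
by rewrite -(mulmx_unit_proj i j) -(mulmx_proj_unit k l) mulmxA
   -(mulmxA _ (p j)) p_orth // mulmx0 mul0mx.
Qed.

End MatrixUnits.

Section Derivations.

Variables (n : nat) (D : 'M[C]_n -> 'M[C]_n).
Hypothesis D_der : is_derivation D.

Lemma derivation0 : D 0 = 0.
Proof.
have := D_der.1 1 0 0; rewrite !scale1r !addr0 -[LHS]addr0.
by move/addrI.
Qed.

Lemma derivationB_scale (lam : C) (x y : 'M[C]_n) :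
  D (x - lam *: y) = D x - lam *: D y.
Proof. by rewrite addrC -scaleNr D_der.1 scaleNr addrC. Qed.

Lemma derivation_sandwich (F X V : 'M[C]_n) :
  F *m X = 0 -> X *m V = 0 -> F *m D X *m V = 0.
Proof.
move=> FX0 XV0; have := D_der.2 X V.
rewrite XV0 derivation0 => /eqP; rewrite eq_sym addr_eq0 => /eqP DXV.
by rewrite -mulmxA DXV mulmxN mulmxA FX0 mul0mx oppr0.
Qed.

End Derivations.

Lemma weak_2_local_derivation_sandwich n (Delta : 'M[C]_n -> 'M[C]_n)
    (q w F V : 'M[C]_n) (lam : C) :
  is_weak_2_local_derivation Delta -> Delta q = 0 ->
  F *m w = lam *: (F *m q) -> w *m V = lam *: (q *m V) ->
  F *m Delta w *m V = 0.
Proof.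
move=> Delta_w2l Dq0 Fw Vw; apply/matrixP=> i j.
pose phi (x : 'M[C]_n) := (F *m x *m V) i j.
have phi_lin : is_functional phi.
  by move=> c x y; rewrite /phi mulmxDr mulmxDl -scalemxAr -scalemxAl !mxE.
have [D [D_der [phi_w phi_q]]] := Delta_w2l w q phi phi_lin.
have DX : F *m (D w - lam *: D q) *m V = 0.
  rewrite -derivationB_scale //; apply: derivation_sandwich => //.
    by rewrite mulmxBr Fw scalemxAr subrr.
  by rewrite mulmxBl Vw scalemxAl subrr.
have phi_Dq : phi (D q) = 0 by rewrite -phi_q Dq0 /phi mulmx0 mul0mx mxE.
rewrite -/(phi _) phi_w mxE -[D w](subrK (lam *: D q)) addrC phi_lin phi_Dq.
by rewrite mulr0 add0r /phi DX mxE.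
Qed.

Lemma corner_decomposition (R : pzRingType) n (P Q X : 'M[R]_n) :
  X = P *m X *m Q + P *m X *m (1%:M - Q)
    + (1%:M - P) *m X *m Q + (1%:M - P) *m X *m (1%:M - Q).
Proof. by rewrite -addrA -!mulmxDr !subrKC !mulmx1 -mulmxDl subrKC mul1mx. Qed.

Lemma neq_falseE (T : eqType) (x y : T) :
  x != y -> ((x == y) = false) * ((y == x) = false).
Proof. by move=> /negbTE xy; rewrite [y == x]eq_sym xy. Qed.

Section WeakLocalDerivationOnUnits.

Variables (n : nat) (e : 'I_n -> 'I_n -> 'M[C]_n) (Delta : 'M[C]_n -> 'M[C]_n).
Hypothesis Delta_w2l : is_weak_2_local_derivation Delta.
Hypothesis e_mul : forall i j k l,
  e i j *m e k l = if j == k then e i l else 0.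
Hypothesis Delta_diag : forall k, Delta (e k k) = 0.

Ltac unit_algebra neqs :=
  rewrite ?scale0r ?scale1r ?mulmxDl ?mulmxDr ?mulNmx ?mulmxN ?mul1mx ?mulmx1
          !e_mul ?eqxx ?neqs /= ?(add0r, addr0, oppr0, subrr, addKr).

Lemma Delta_unit_corner i j :
  i != j -> Delta (e i j) = e i i *m Delta (e i j) *m e j j.
Proof.
move=> ij; have neqs := neq_falseE ij.
have off_off : (1%:M - e i i) *m Delta (e i j) *m (1%:M - e j j) = 0.
  by apply: (weak_2_local_derivation_sandwich (lam := 0) Delta_w2l
              (Delta_diag i)); unit_algebra neqs.
have off_diag : (1%:M - e i i) *m Delta (e i j) *m e j j = 0.
  have : (1%:M - e i i) *m Delta (e i j) *m (e j j + e i j) = 0.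
    by apply: (weak_2_local_derivation_sandwich (lam := 1) Delta_w2l
                (Delta_diag i)); unit_algebra neqs.
  have offj_w : (1%:M - e j j) *m e i j = e i j by unit_algebra neqs.
  by rewrite mulmxDr -[X in _ + _ *m X]offj_w mulmxA off_off mul0mx addr0.
have diag_off : e i i *m Delta (e i j) *m (1%:M - e j j) = 0.
  have : (e i i + e i j) *m Delta (e i j) *m (1%:M - e j j) = 0.
    by apply: (weak_2_local_derivation_sandwich (lam := 1) Delta_w2l
                (Delta_diag j)); unit_algebra neqs.
  have w_offi : e i j *m (1%:M - e i i) = e i j by unit_algebra neqs.
  rewrite !mulmxDl -[X in _ + X *m _ *m _]w_offi -(mulmxA (e i j) _ (Delta _)).
  by rewrite -(mulmxA (e i j)) off_off mulmx0 addr0.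
rewrite {1}(corner_decomposition (e i i) (e j j) (Delta (e i j))).
by rewrite off_diag diag_off off_off !addr0.
Qed.

Lemma Delta_unit_eq0 o i j :
  o != i -> o != j -> i != j ->
  Delta (e o o + e o j - e i o) = 0 -> Delta (e i j) = 0.
Proof.
move=> oi oj ij Dq0.
have neqs := (neq_falseE oi, neq_falseE oj, neq_falseE ij).
have sandwich : (e o i + e o o) *m Delta (e i j) *m (e o o - e j o) = 0.
  by apply: (weak_2_local_derivation_sandwich (lam := 1) Delta_w2l Dq0);
     unit_algebra neqs.
have corner := Delta_unit_corner ij.
set X := Delta (e i j) in corner sandwich *.
have X_l : e i i *m X = X by rewrite corner !mulmxA e_mul eqxx.
have X_r : X *m e j j = X by rewrite corner -mulmxA e_mul eqxx.
have corner0 : e o i *m X *m e j o = 0.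
  move: sandwich; rewrite -X_r -X_l !mulmxA mulmxDl -!(mulmxA _ (e j j)).
  rewrite mulmxBr !e_mul eqxx !neqs addr0 sub0r mulmxN => /eqP.
  by rewrite oppr_eq0 => /eqP.
rewrite -X_r -X_l.
have -> : e i i = e i o *m e o i by rewrite e_mul eqxx.
have -> : e j j = e j o *m e o j by rewrite e_mul eqxx.
rewrite !mulmxA -(mulmxA (e i o) (e o i)) -(mulmxA (e i o) (e o i *m X)).
by rewrite corner0 mulmx0 mul0mx.
Qed.

End WeakLocalDerivationOnUnits.

Theorem lemma2p8 (n : nat) (hn : (0 < n)%N)
    (Delta : 'M[C]_n -> 'M[C]_n) (p : 'I_n -> 'M[C]_n)
    (e : 'I_n -> 'I_n -> 'M[C]_n) (i0 j0 : 'I_n) :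
  is_weak_2_local_derivation Delta ->
  (forall k, is_minimal_projection (p k)) ->
  (forall k l, k != l -> p k *m p l = 0) ->
  (forall i j, adjmx (e i j) *m e i j = p j /\ e i j *m adjmx (e i j) = p i) ->
  (forall i j k, e i j *m e j k = e i k) ->
  (forall k, Delta (p k) = 0) ->
  (0 < i0)%N -> (0 < j0)%N ->
  Delta (p (Ordinal hn) + e (Ordinal hn) j0 - e i0 (Ordinal hn)) = 0 ->
  Delta (e i0 j0) = 0.
Proof.
move=> Delta_w2l p_min p_orth e_adj e_trans Delta_p i0_gt0 j0_gt0 Delta_q.
have p_proj k : is_projection (p k) := (p_min k).1.
have e_diag := unit_diag p_proj e_adj e_trans.
have e_mul := mulmx_units p_proj p_orth e_adj e_trans.
have Delta_diag k : Delta (e k k) = 0 by rewrite e_diag.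
have [<-|i0j0] := eqVneq i0 j0; first exact: Delta_diag.
have ord_gt0_neq (k : 'I_n) : (0 < k)%N -> Ordinal hn != k.
  by move=> k_gt0; rewrite -val_eqE /= neq_ltn k_gt0.
rewrite -e_diag in Delta_q.
exact (Delta_unit_eq0 Delta_w2l e_mul Delta_diag
  (ord_gt0_neq _ i0_gt0) (ord_gt0_neq _ j0_gt0) i0j0 Delta_q).
Qed.
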